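(* Let $n\ge 2$ and $v\in A_n$. Then $1$ and $2$ lie in the same cycle of $v$ if and only if $\ell_{T(A_n)}(v)$ is odd.
   Context: $A_n$ is the alternating group on $\{1,\dots,n\}$, $T(A_n)=\{(1\,2)(i\,j)\mid 1\le i<j\le n\}$, and $\ell_{T(A_n)}(v)=\min\{k\ge 0\mid v=t_1\cdots t_k,\ t_i\in T(A_n)\}$. Cycles refer to the disjoint cycle decomposition of $v$ (fixed points are cycles of length 1). *)

From mathcomp Require Import all_boot all_order all_fingroup all_solvable.
Set Implicit Arguments. Unset Strict Implicit. Unset Printing Implicit Defensive.
Local Open Scope group_scope.

(* Points 1,...,n of the paper are the ordinals 0,...,n-1 of 'I_n:
   paper point k corresponds to the ordinal with value k-1.  *)

(* Paper-style composition of permutations as functions: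
   (s \o t)(x) = s (t x).  In MathComp, (s * t) x = t (s x), so
   s \o t = t * s. *)
Definition pcomp (n : nat) (s t : {perm 'I_n}) : {perm 'I_n} := t * s.

Definition TAn (n : nat) : {set {perm 'I_n}} :=
  [set g | [exists a : 'I_n, exists b : 'I_n, exists i : 'I_n, exists j : 'I_n,
     [&& val a == 0%N, val b == 1%N, (i < j)%N & g == pcomp (tperm a b) (tperm i j)]]].

Definition word_prod (n : nat) (w : seq {perm 'I_n}) : {perm 'I_n} :=
  foldr (@pcomp n) 1 w.

Definition T_word_of_length (n : nat) (v : {perm 'I_n}) (k : nat) : Prop :=
  exists w : seq {perm 'I_n},
    [/\ size w = k, all (fun t => t \in TAn n) w & word_prod w = v].

Definition T_length_is (n : nat) (v : {perm 'I_n}) (k : nat) : Prop :=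
  T_word_of_length v k /\ forall m, T_word_of_length v m -> (k <= m)%N.

From mathcomp Require Import all_boot all_order all_fingroup all_solvable.
From mathcomp Require Import zify.
Set Implicit Arguments. Unset Strict Implicit. Unset Printing Implicit Defensive.
Local Open Scope group_scope.

(* Let tau = (1 2) and let tperm_length s = n - #(cycles of s), the least number of
   transpositions with product s.  Moving each tau to the right by conjugation, a word
   ((i_1 j_1) tau) ... ((i_k j_k) tau) equals s tau^k with s a product of k
   transpositions, and conversely.  Hence the shortest word for v has length
   min(tperm_length v, tperm_length (v tau)), where the first is even and the second
   odd because v is even.  Multiplying by tau splits the cycle of v through 1 and 2 if
   there is one, lowering tperm_length by one, and otherwise joins two cycles, raising
   it; so the minimum is the odd one exactly when 1 and 2 share a cycle. *)

Section TpermLength.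
Variable T : finType.
Implicit Types (s : {perm T}) (ts : seq (T * T)).

Definition tperm_length s := (#|T| - #|porbits s|)%N.

Lemma card_porbits1 : #|porbits (1 : {perm T})| = #|T|.
Proof.
rewrite /porbits card_imset // => x y /eqP; rewrite eq_porbit_mem.
by rewrite porbit.unlock cycle1 imset_set1 /aperm perm1 inE => /eqP.
Qed.

Lemma card_porbits_le s : (#|porbits s| <= #|T|)%N.
Proof. exact: leq_trans (leq_imset_card _ _) (max_card _). Qed.

Lemma card_porbits_mul_tperm_le x y s :
  (#|porbits s| <= #|porbits (tperm x y * s)|.+1)%N.
Proof.
have [->|xy] := eqVneq x y; first by rewrite tperm1 mul1g.
by have := porbits_mul_tperm s x y; rewrite /= xy; case: (x \in _) => /=; lia.
Qed.

Lemma card_porbits_mul_tpermr s x y :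
  #|porbits (s * tperm x y)| + (x \notin porbit s y).*2 = #|porbits s| + (x != y).
Proof.
by rewrite -porbitsV invMg tpermV -(porbitV s) porbits_mul_tperm porbitsV.
Qed.

Lemma tperm_length_mul_tperm x y s :
  x != y -> x \in porbit s y -> (tperm_length (tperm x y * s)).+1 = tperm_length s.
Proof.
move=> xy sxy; have := porbits_mul_tperm s x y.
rewrite /= sxy xy double0 addn0 addn1 => cs.
by rewrite /tperm_length cs subnSK // -cs card_porbits_le.
Qed.

Lemma tperm_length_prod ts :
  (tperm_length (\prod_(t <- ts) tperm t.1 t.2) <= size ts)%N.
Proof.
elim: ts => [|[x y] ts IHts]; first by rewrite big_nil /tperm_length card_porbits1 subnn.
move: IHts; rewrite big_cons /tperm_length /= !leq_subLR addnS -addSn.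
by move/leq_trans; apply; rewrite leq_add2r card_porbits_mul_tperm_le.
Qed.

Lemma tperm_length_eq0 s : (tperm_length s == 0%N) = (s == 1).
Proof.
apply/idP/eqP => [s0 | ->]; last by rewrite /tperm_length card_porbits1 subnn.
apply/permP => x; rewrite perm1; apply: contraTeq s0 => sx.
have sxx : x \in porbit s (s x) by rewrite -[s]expg1 porbit_perm porbit_id.
by rewrite -(tperm_length_mul_tperm _ sxx) // eq_sym.
Qed.

Lemma prod_tperm_length s : exists ts,
  [/\ all dpair ts, size ts = tperm_length s & s = \prod_(t <- ts) tperm t.1 t.2].
Proof.
move sm: (tperm_length s) => m; elim: m s sm => [|m IHm] s sm.
  have /eqP -> : s == 1 by rewrite -tperm_length_eq0 sm.
  by exists [::]; rewrite big_nil.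
have [x sx] : exists x, s x != x.
  apply/existsP; apply: contraNT (_ : s != 1); last by rewrite -tperm_length_eq0 sm.
  by rewrite negb_exists => /forallP s1; apply/eqP/permP => x; rewrite perm1; apply/eqP/negbNE.
have xsx : x != s x by rewrite eq_sym.
have sxx : x \in porbit s (s x) by rewrite -[s]expg1 porbit_perm porbit_id.
have := tperm_length_mul_tperm xsx sxx; rewrite sm => /succn_inj /IHm[ts [dts sts Es]].
exists ((x, s x) :: ts); rewrite /= xsx sts big_cons /= -Es mulgA tperm2 mul1g.
by split.
Qed.

Lemma tperm_length_mul_tpermr s x y : x != y ->
  tperm_length (s * tperm x y) =
    if x \in porbit s y then (tperm_length s).-1 else (tperm_length s).+1.
Proof.
move=> xy; have := card_porbits_mul_tpermr s x y; rewrite xy /tperm_length.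
case: ifP => _ /=; first by rewrite double0 addn0 addn1 => ->; rewrite subnS.
by rewrite addn1 addn2 => /succn_inj cs; rewrite -cs subnSK // cs card_porbits_le.
Qed.

Lemma odd_tperm_length s : odd (tperm_length s) = odd_perm s.
Proof. by rewrite /tperm_length (oddB (card_porbits_le s)). Qed.

Lemma tperm_expg_odd (x y : T) k : tperm x y ^+ k = tperm x y ^+ odd k.
Proof.
elim: k => // k IHk; rewrite expgS IHk /=.
by case: (odd k); rewrite /= ?expg1 ?expg0 ?tperm2 ?mulg1.
Qed.

End TpermLength.

Lemma T_length_is_unique n (v : {perm 'I_n}) k m :
  T_length_is v k -> T_length_is v m -> k = m.
Proof. by case=> wk mink [wm minm]; apply/anti_leq; rewrite mink ?minm. Qed.

Section TAlternatingWords.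
Variables (n : nat) (one two : 'I_n).
Hypotheses (val_one : val one = 0%N) (val_two : val two = 1%N).
Local Notation tau := (tperm one two).

Lemma one_neq_two : one != two.
Proof. by apply/eqP => e; move: val_two; rewrite -e val_one. Qed.

Lemma TAnP (t : {perm 'I_n}) : t \in TAn n <-> exists x y, x != y /\ t = tperm x y * tau.
Proof.
rewrite inE; split.
  case/existsP => a /existsP [b /existsP [i /existsP [j /and4P [/eqP a0 /eqP b1 ij /eqP ->]]]].
  have -> : a = one by apply: val_inj; rewrite a0 val_one.
  have -> : b = two by apply: val_inj; rewrite b1 val_two.
  by exists i, j; rewrite neq_ltn ij.
case=> x [y [xy ->]]; apply/existsP; exists one; apply/existsP; exists two.
have [lt|lt|/val_inj eq] := ltngtP x y; last by rewrite eq eqxx in xy.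
  by apply/existsP; exists x; apply/existsP; exists y; rewrite val_one val_two lt /pcomp !eqxx.
by apply/existsP; exists y; apply/existsP; exists x; rewrite val_one val_two lt tpermC /pcomp !eqxx.
Qed.

Lemma mul_tau_tpermE (u : {perm 'I_n}) (x y : 'I_n) k :
  u * (tperm x y * tau) * tau ^+ k.+1 = u * tau ^+ k * tperm ((tau ^+ k) x) ((tau ^+ k) y).
Proof.
rewrite -tpermJ -[RHS]mulgA -conjgC expgS !mulgA.
by rewrite -(mulgA _ tau tau) tperm2 mulg1.
Qed.

Lemma T_word_of_lengthP v k : T_word_of_length v k <->
  exists ts : seq ('I_n * 'I_n),
    [/\ size ts = k, all dpair ts & v * tau ^+ k = \prod_(t <- ts) tperm t.1 t.2].
Proof.
split.
  case=> w [<- Tw <-] {k v}; elim: w Tw => [|t w IHw] /=.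
    by exists [::]; rewrite big_nil expg0 mulg1.
  case/andP => /TAnP[x [y [xy ->]]] /IHw[ts [sts dts Ets]].
  exists (rcons ts ((tau ^+ size w) x, (tau ^+ size w) y)).
  rewrite size_rcons sts all_rcons /= (inj_eq perm_inj) xy dts big_rcons /= -Ets.
  by split=> //; rewrite /pcomp mul_tau_tpermE.
case=> ts [<- dts] {k}; elim/last_ind: ts dts v => [|ts [x y] IHts] /=.
  by move=> _ v; rewrite expg0 mulg1 big_nil => ->; exists [::].
rewrite all_rcons size_rcons big_rcons /= => /andP[xy dts] v Ev.
set c := tau ^+ size ts in Ev *.
have cK : involutive c.
  by move=> z; rewrite /c tperm_expg_odd; case: (odd _); rewrite /= ?expg1 ?tpermK ?expg0 ?perm1.
have [w [sw Tw Ew]] := IHts dts (\prod_(t <- ts) tperm t.1 t.2 * c^-1) (mulgKV _ _).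
exists ((tperm (c x) (c y) * tau) :: w); split; first by rewrite /= sw.
  by rewrite /= Tw andbT; apply/TAnP; exists (c x), (c y); rewrite (inj_eq perm_inj).
apply: (mulIg (tau ^+ (size ts).+1)).
by rewrite /= /pcomp Ew mul_tau_tpermE !cK mulgKV Ev.
Qed.

Lemma tperm_length_le_T_word v k :
  T_word_of_length v k -> (tperm_length (v * tau ^+ k) <= k)%N.
Proof. by case/T_word_of_lengthP => ts [<- _ ->]; apply: tperm_length_prod. Qed.

Section EvenPermutation.
Variable v : {perm 'I_n}.
Hypothesis v_even : v \in 'Alt_('I_n).

Lemma odd_tperm_length_mul_tau k : odd (tperm_length (v * tau ^+ k)) = odd k.
Proof.
rewrite odd_tperm_length odd_permM -[odd_perm v]negbK -Alt_even v_even tperm_expg_odd.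
by case: (odd k); rewrite /= ?expg1 ?odd_tperm ?one_neq_two ?expg0 ?odd_perm1.
Qed.

Lemma T_word_of_tperm_length k : T_word_of_length v (tperm_length (v * tau ^+ k)).
Proof.
have [ts [dts sts Ets]] := prod_tperm_length (v * tau ^+ k).
apply/T_word_of_lengthP; exists ts; split => //.
by rewrite tperm_expg_odd odd_tperm_length_mul_tau -tperm_expg_odd.
Qed.

Lemma T_length_minn : T_length_is v (minn (tperm_length v) (tperm_length (v * tau))).
Proof.
have Tv := T_word_of_tperm_length 0; have Tvtau := T_word_of_tperm_length 1.
rewrite expg0 mulg1 in Tv; rewrite expg1 in Tvtau.
split; first by rewrite /minn; case: ifP.
move=> m /tperm_length_le_T_word; rewrite tperm_expg_odd.
by case: (odd m); rewrite /= ?expg1 ?expg0 ?mulg1; apply: leq_trans; rewrite ?geq_minl ?geq_minr.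
Qed.

Lemma odd_T_length k : T_length_is v k -> odd k = (two \in porbit v one).
Proof.
move=> /T_length_is_unique /(_ T_length_minn) ->.
have odd_v := odd_tperm_length_mul_tau 0; have odd_vtau := odd_tperm_length_mul_tau 1.
rewrite expg0 mulg1 in odd_v; rewrite expg1 in odd_vtau.
have := tperm_length_mul_tpermr v (_ : two != one); rewrite tpermC eq_sym one_neq_two.
case: ifP => _ /(_ isT) vtau; rewrite vtau in odd_vtau *.
  by rewrite (minn_idPr (leq_pred _)) odd_vtau.
by rewrite (minn_idPl (leqnSn _)) odd_v.
Qed.

End EvenPermutation.
End TAlternatingWords.

Theorem corollary6p2 (n : nat) (hn : (2 <= n)%N) (one two : 'I_n)
    (h1 : val one = 0%N) (h2 : val two = 1%N)
    (v : {perm 'I_n}) (hv : v \in ('Alt_('I_n))%g) :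
  two \in porbit v one <-> (exists k : nat, T_length_is v k /\ odd k).
Proof.
have odd_T := odd_T_length h1 h2 hv.
split=> [two_one | [k [Tk ok]]]; last by rewrite -(odd_T _ Tk).
have Tmin := T_length_minn h1 h2 hv.
by eexists; split; [exact: Tmin | rewrite (odd_T _ Tmin)].
Qed.
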